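(* Two epistemic logic programs $\Pi_1$ and $\Pi_2$ are strongly equivalent (in any of the four senses: strongly ELP-WV-, ASP-WV-, ELP-CWV- or ASP-CWV-equivalent) if and only if they have the same SE-function, i.e. $\mathcal{SE}_{\Pi_1}=\mathcal{SE}_{\Pi_2}$.
   Context: A literal over a set of atoms $\mathcal{A}$ is an atom $a$ or $\neg a$. An interpretation is $I\subseteq\mathcal{A}$; $I\models a$ iff $a\in I$, $I\models\neg\ell$ iff $I\not\models\ell$. A (plain) logic program $(\mathcal{A},\mathcal{R})$ has rules $a_1\vee\cdots\vee a_l \leftarrow a_{l+1},\ldots,a_m,\neg\ell_1,\ldots,\neg\ell_n$ ($\ell_i$ literals); $H(r)$ head, $B(r)$ body, $B^+(r)=\{a_{l+1},\ldots,a_m\}$; $M\models r$ iff $M\models B(r)$ implies $M\cap H(r)\neq\emptyset$; $\mathrm{Mods}(\Pi)$ is the set of models. GL-reduct: $\Pi^I=(\mathcal{A},\{H(r)\leftarrow B^+(r)\mid r\in\mathcal{R},\ I\models\neg\ell\ \forall\neg\ell\in B(r)\})$. Answer set: model $M$ of $\Pi$ such that no $M'\subset M$ is a model of $\Pi^M$; $AS(\Pi)$ the set of answer sets ($\neg\neg\neg a$ treated as $\neg a$). An SE-model of $\Pi$ is $(X,Y)$ with $X\subseteq Y\subseteq\mathcal{A}$, $Y\models\Pi$, $X\models\Pi^Y$; $\mathrm{SE}(\Pi)$ the set of SE-models. An ELP is $(\mathcal{A},\mathcal{E},\mathcal{R})$ with $\mathcal{E}$ a set of epistemic literals $\mathbf{not}\,\ell$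 and rules $a_1\vee\cdots\vee a_k\leftarrow \ell_1,\ldots,\ell_m,\xi_1,\ldots,\xi_j,\neg\xi_{j+1},\ldots,\neg\xi_n$, $\xi_i\in\mathcal{E}$. Union of ELPs is componentwise; a plain logic program is an ELP with no epistemic literals. A guess is $\Phi\subseteq\mathcal{E}$; $\mathcal{I}$ is $\Phi$-compatible w.r.t. $\mathcal{E}$ iff $\mathcal{I}\neq\emptyset$, every $\mathbf{not}\,\ell\in\Phi$ has some $I\in\mathcal{I}$ with $I\not\models\ell$, and every $\mathbf{not}\,\ell\in\mathcal{E}\setminus\Phi$ has $I\models\ell$ for all $I\in\mathcal{I}$. The epistemic reduct $\Pi^\Phi=(\mathcal{A},\mathcal{R}^\Phi)$ replaces each $\mathbf{not}\,\ell\in\Phi$ by $\top$ and every other $\mathbf{not}$ by $\neg$. A candidate world view (CWV) of $\Pi$ is $\mathcal{M}=AS(\Pi^\Phi)$ that is $\Phi$-compatible w.r.t. $\mathcal{E}$, for some guess $\Phi$; a world view (WV) is a CWV whose associated guess is subset-maximal among associated guesses of CWVs. CWV-/WV-equivalence means equal sets of CWVs/WVs. Strong ELP-(C)WV-equivalence of $\Pi_1,\Pi_2$: for every ELP $\Pi$, $\Pi_1\cup\Pi$ and $\Pi_2\cup\Pi$ are (C)WV-equivalent; strong ASP-(C)WV-equivalence: the same for every plain logic program $\Pi$. $\Phi$ is realizable in $\Pi$ iff some subset of $\mathrm{Mods}(\Pi^\Phi)$ is $\Phi$-compatible w.r.t. $\mathcal{E}$. SE-function: $\mathcal{SE}_\Pi(\Phi)=\mathrm{SE}(\Pi^\Phi)$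 if $\Phi$ is realizable in $\Pi$, else $\emptyset$. *)

From HB Require Import structures.
From mathcomp Require Import all_boot.
From mathcomp Require Export finmap.
Set Implicit Arguments. Unset Strict Implicit. Unset Printing Implicit Defensive.

Local Open Scope fset_scope.

Section ELP.
Variable atom : choiceType.

(* A literal is a pair (b, a): (true, a) is the atom a, (false, a) is ¬a. *)
Local Notation lit := (bool * atom)%type.

Definition sat_lit (I : {fset atom}) (l : lit) : bool :=
  if l.1 then l.2 \in I else l.2 \notin I.

(* rule  phead <- ppos, ¬ℓ (ℓ ∈ pneg) ; B+(r) = ppos *)
Record prule := PRule { phead : seq atom; ppos : seq atom; pneg : seq lit }.
Record plp := PLP { plp_atoms : {fset atom}; plp_rules : seq prule }.

Definition prule_sat (M : {fset atom}) (r : prule) : bool :=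
  (all (fun a => a \in M) (ppos r) && all (fun l => ~~ sat_lit M l) (pneg r))
  ==> has (fun a => a \in M) (phead r).

Definition is_model (P : plp) (M : {fset atom}) : Prop :=
  M `<=` plp_atoms P /\ all (prule_sat M) (plp_rules P).

Definition gl_reduct (P : plp) (I : {fset atom}) : plp :=
  PLP (plp_atoms P)
      [seq PRule (phead r) (ppos r) [::] | r <- plp_rules P
         & all (fun l => ~~ sat_lit I l) (pneg r)].

Definition answer_set (P : plp) (M : {fset atom}) : Prop :=
  is_model P M /\ forall M', M' `<` M -> ~ is_model (gl_reduct P M) M'.

Definition se_model (P : plp) (X Y : {fset atom}) : Prop :=
  X `<=` Y /\ Y `<=` plp_atoms P /\ is_model P Y /\ is_model (gl_reduct P Y) X.

(* body elements: ℓ, ¬ℓ, not ℓ, ¬ not ℓ  (ℓ a literal) *)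
Inductive belem :=
  | BLit of lit | BNotLit of lit | BEp of lit | BNotEp of lit.
Record erule := ERule { ehead : seq atom; ebody : seq belem }.
(* (A, E, R); E is the set of epistemic literals  not ℓ, represented by ℓ *)
Record elp := ELP { elp_atoms : {fset atom}; elp_elits : {fset lit};
                    elp_rules : seq erule }.

Definition elp_union (P Q : elp) : elp :=
  ELP (elp_atoms P `|` elp_atoms Q) (elp_elits P `|` elp_elits Q)
      (elp_rules P ++ elp_rules Q).

Definition belem_atom (b : belem) : atom :=
  match b with BLit l | BNotLit l | BEp l | BNotEp l => l.2 end.
Definition belem_elit (b : belem) : option lit :=
  match b with BEp l | BNotEp l => Some l | _ => None end.

Definition wf_elp (P : elp) : Prop :=
  (forall l, l \in elp_elits P -> l.2 \in elp_atoms P) /\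
  all (fun r =>
     [&& all (fun a => a \in elp_atoms P) (ehead r),
         all (fun b => belem_atom b \in elp_atoms P) (ebody r) &
         all (fun b => if belem_elit b is Some l then l \in elp_elits P else true)
             (ebody r)]) (elp_rules P).

Definition is_plain (P : elp) : Prop :=
  elp_elits P = fset0 /\
  all (fun r => all (fun b => ~~ belem_elit b) (ebody r)) (elp_rules P).

(* epistemic reduct of a body element: Some (positive atoms, negated literals),
   None when the element becomes ⊥ (¬⊤).  ¬¬¬a is treated as ¬a. *)
Definition belem_reduct (Phi : {fset lit}) (b : belem)
  : option (seq atom * seq lit) :=
  match b with
  | BLit l => if l.1 then Some ([:: l.2], [::]) else Some ([::], [:: (true, l.2)])
  | BNotLit l => Some ([::], [:: l])
  | BEp l => if l \in Phi then Some ([::], [::]) else Some ([::], [:: l])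
  | BNotEp l => if l \in Phi then None
                else Some ([::], [:: (~~ l.1, l.2)])
  end.

Fixpoint body_reduct (Phi : {fset lit}) (bs : seq belem)
  : option (seq atom * seq lit) :=
  match bs with
  | [::] => Some ([::], [::])
  | b :: bs' =>
      match belem_reduct Phi b, body_reduct Phi bs' with
      | Some (p, n), Some (p', n') => Some (p ++ p', n ++ n')
      | _, _ => None
      end
  end.

(* rules whose body contains ⊥ are dropped (they are trivially satisfied and
   are removed by every GL-reduct) *)
Definition erule_reduct (Phi : {fset lit}) (r : erule) : option prule :=
  if body_reduct Phi (ebody r) is Some (p, n) then Some (PRule (ehead r) p n)
  else None.

Definition elp_reduct (P : elp) (Phi : {fset lit}) : plp :=
  PLP (elp_atoms P) (pmap (erule_reduct Phi) (elp_rules P)).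

Definition compatible (Ic : {fset atom} -> Prop) (Phi E : {fset lit}) : Prop :=
  (exists I, Ic I) /\
  (forall l, l \in Phi -> exists I, Ic I /\ ~~ sat_lit I l) /\
  (forall l, l \in E -> l \notin Phi -> forall I, Ic I -> sat_lit I l).

Definition cwv_with (P : elp) (Phi : {fset lit}) (Ic : {fset atom} -> Prop)
  : Prop :=
  Phi `<=` elp_elits P /\
  (forall I, Ic I <-> answer_set (elp_reduct P Phi) I) /\
  compatible Ic Phi (elp_elits P).

Definition is_cwv (P : elp) (Ic : {fset atom} -> Prop) : Prop :=
  exists Phi, cwv_with P Phi Ic.

Definition is_wv (P : elp) (Ic : {fset atom} -> Prop) : Prop :=
  exists Phi, cwv_with P Phi Ic /\
    forall Phi' Ic', cwv_with P Phi' Ic' -> ~~ (Phi `<` Phi').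

Definition cwv_equiv (P Q : elp) : Prop :=
  forall Ic, is_cwv P Ic <-> is_cwv Q Ic.
Definition wv_equiv (P Q : elp) : Prop :=
  forall Ic, is_wv P Ic <-> is_wv Q Ic.

Definition strong_elp_wv_equiv (P1 P2 : elp) : Prop :=
  forall P, wf_elp P -> wv_equiv (elp_union P1 P) (elp_union P2 P).
Definition strong_asp_wv_equiv (P1 P2 : elp) : Prop :=
  forall P, wf_elp P -> is_plain P -> wv_equiv (elp_union P1 P) (elp_union P2 P).
Definition strong_elp_cwv_equiv (P1 P2 : elp) : Prop :=
  forall P, wf_elp P -> cwv_equiv (elp_union P1 P) (elp_union P2 P).
Definition strong_asp_cwv_equiv (P1 P2 : elp) : Prop :=
  forall P, wf_elp P -> is_plain P -> cwv_equiv (elp_union P1 P) (elp_union P2 P).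

Definition realizable (P : elp) (Phi : {fset lit}) : Prop :=
  exists Ic : {fset atom} -> Prop,
    (forall I, Ic I -> is_model (elp_reduct P Phi) I) /\
    compatible Ic Phi (elp_elits P).

Definition SE_fun (P : elp) (Phi : {fset lit}) (X Y : {fset atom}) : Prop :=
  realizable P Phi /\ se_model (elp_reduct P Phi) X Y.

Definition same_SE_fun (P1 P2 : elp) : Prop :=
  forall Phi, Phi `<=` elp_elits P1 -> Phi `<=` elp_elits P2 ->
    forall X Y, SE_fun P1 Phi X Y <-> SE_fun P2 Phi X Y.

End ELP.

(* If the SE-functions agree, let M be a CWV of Π₁ ∪ Π with guess Ψ.  The guess
   Φ = Ψ ∩ E is realizable in Π₁, so Π₁^Φ and Π₂^Φ have the same SE-models.  The
   answer sets of (Πᵢ ∪ Π)^Ψ depend on Πᵢ only through these SE-models (restricting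
   interpretations to the atoms of Πᵢ), hence M is a CWV of Π₂ ∪ Π; world views
   follow because a CWV determines its guess.
   Conversely, let (X, Y) ∈ SE_Π₁(Φ) \ SE_Π₂(Φ).  A gadget for a pair (X', Y') is a
   set of plain rules guarded by a fresh atom c making c ∪ Y' the only answer-set
   candidate containing c; it is an answer set of (Πᵢ ∪ gadgets)^Φ iff Y' ⊨ Πᵢ^Φ
   and (X', Y') is not an SE-model of Πᵢ^Φ with X' ⊂ Y'.  Gadgets (I, I) for a
   finite witness that Φ is realizable, plus one gadget on which Π₁ and Π₂
   disagree, yield a world view with guess Φ of one union that is not a candidate
   world view of the other. *)

From HB Require Import structures.
From mathcomp Require Import all_boot finmap.
From Stdlib Require Import Classical.
Set Implicit Arguments. Unset Strict Implicit. Unset Printing Implicit Defensive.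
Local Open Scope fset_scope.

Lemma eq_all_on (T : Type) (dom p q : pred T) s :
  all dom s -> (forall x, dom x -> p x = q x) -> all p s = all q s.
Proof. by elim: s => //= x s IH /andP[domx doms] pq; rewrite pq // IH. Qed.

Section Semantics.
Variable atom : choiceType.
Local Notation lit := (bool * atom)%type.
Implicit Types (Phi Psi : {fset lit}) (A X Y M : {fset atom}) (P Q : elp atom).

Definition neg_ok Y (n : seq lit) : bool := all (fun l => ~~ sat_lit Y l) n.

(* Positive atoms left by the epistemic reduct w.r.t. [Phi] followed by the
   GL-reduct w.r.t. [Y]; [None] when one of the two reducts deletes the rule. *)
Definition elem_gl Phi Y (b : belem atom) : option (seq atom) :=
  if belem_reduct Phi b is Some (p, n) then (if neg_ok Y n then Some p else None)
  else None.

Definition body_gl Phi Y (bs : seq (belem atom)) : option (seq atom) :=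
  if body_reduct Phi bs is Some (p, n) then (if neg_ok Y n then Some p else None)
  else None.

Lemma body_gl_cons Phi Y b bs : body_gl Phi Y (b :: bs) =
  if elem_gl Phi Y b is Some p then omap (cat p) (body_gl Phi Y bs) else None.
Proof.
rewrite /body_gl /elem_gl /=.
case: (belem_reduct Phi b) => [[p n]|] //.
case: (body_reduct Phi bs) => [[p' n']|]; rewrite /neg_ok ?all_cat.
  by case: (all _ n); case: (all _ n').
by case: (all _ n).
Qed.

Definition erule_sat Phi Y X (r : erule atom) : bool :=
  if body_gl Phi Y (ebody r) is Some p then
    all (mem X) p ==> has (mem X) (ehead r)
  else true.

Definition reduct_sat P Phi Y X : bool := all (erule_sat Phi Y X) (elp_rules P).

Definition se_pair P Phi X Y : bool := reduct_sat P Phi Y Y && reduct_sat P Phi Y X.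

Lemma is_model_reductE P Phi Y X :
  is_model (gl_reduct (elp_reduct P Phi) Y) X <->
  X `<=` elp_atoms P /\ reduct_sat P Phi Y X.
Proof.
rewrite /is_model /reduct_sat /= all_map all_filter all_pmap.
rewrite [in X in _ /\ X <-> _](@eq_all _ _ (erule_sat Phi Y X)) // => r /=.
rewrite /erule_reduct /erule_sat /body_gl.
case: (body_reduct Phi (ebody r)) => [[p n]|] //=; rewrite /prule_sat /= andbT.
by rewrite /neg_ok; case: (all _ n).
Qed.

Lemma is_model_gl_reduct_self (P : plp atom) M : is_model P M <-> is_model (gl_reduct P M) M.
Proof.
rewrite /is_model /= all_map all_filter.
rewrite [in X in _ <-> _ /\ X](@eq_all _ _ (prule_sat M)) // => r /=.
rewrite /prule_sat /= andbT.
by case: (all _ (pneg r)); rewrite ?andbT ?andbF.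
Qed.

Lemma is_model_elp_reductE P Phi Y :
  is_model (elp_reduct P Phi) Y <-> Y `<=` elp_atoms P /\ reduct_sat P Phi Y Y.
Proof. by rewrite is_model_gl_reduct_self is_model_reductE. Qed.

Lemma se_modelE P Phi X Y : se_model (elp_reduct P Phi) X Y <->
  [/\ X `<=` Y, Y `<=` elp_atoms P & se_pair P Phi X Y].
Proof.
rewrite /se_model is_model_elp_reductE is_model_reductE /se_pair.
split=> [[XY [YA [[_ ->] [_ ->]]]] //|[XY YA /andP[YY XY']]].
by do !split=> //; apply: fsubset_trans YA.
Qed.

Lemma answer_setE P Phi M : answer_set (elp_reduct P Phi) M <->
  [/\ M `<=` elp_atoms P, se_pair P Phi M M &
      forall M', M' `<` M -> ~~ se_pair P Phi M' M].
Proof.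
rewrite /answer_set is_model_elp_reductE /se_pair andbb.
split=> [[[MA MM] minM]|[MA MM minM]]; split=> //.
  move=> M' ltM'; rewrite MM /=; apply/negP => M'M; apply: (minM _ ltM').
  by apply/is_model_reductE; split=> //; apply: fsubset_trans (fproper_sub ltM') MA.
by move=> M' ltM' /is_model_reductE[_ M'M]; move: (minM _ ltM'); rewrite MM M'M.
Qed.

(* Literals of [E] on which the guesses differ are false in [Y]: then [not l] and
   [~ not l] have the same GL-reduct w.r.t. [Y] under both guesses. *)
Definition guess_free_on Y (E Phi Phi' : {fset lit}) : Prop :=
  {in E, forall l, (l \in Phi) = (l \in Phi') \/ ~~ sat_lit Y l}.

Lemma sat_lit_negb Y (l : lit) : sat_lit Y (~~ l.1, l.2) = ~~ sat_lit Y l.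
Proof. by case: l => -[] a; rewrite /sat_lit /= ?negbK. Qed.

Lemma elem_gl_guess E Phi Phi' Y b : guess_free_on Y E Phi Phi' ->
  (if belem_elit b is Some l then l \in E else true) ->
  elem_gl Phi Y b = elem_gl Phi' Y b.
Proof.
move=> free; rewrite /elem_gl; case: b => //= l /free[->//|unsat];
  by case: (l \in Phi); case: (l \in Phi'); rewrite /neg_ok /= ?sat_lit_negb ?negbK ?(negbTE unsat).
Qed.

Lemma body_gl_guess E Phi Phi' Y bs : guess_free_on Y E Phi Phi' ->
  all (fun b => if belem_elit b is Some l then l \in E else true) bs ->
  body_gl Phi Y bs = body_gl Phi' Y bs.
Proof.
move=> free; elim: bs => [|b bs IH] //= /andP[bE bsE].
by rewrite !body_gl_cons (elem_gl_guess free bE) IH.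
Qed.

Lemma sat_lit_fsetI A Y l : l.2 \in A -> sat_lit (Y `&` A) l = sat_lit Y l.
Proof. by move=> lA; rewrite /sat_lit in_fsetI lA andbT. Qed.

Lemma elem_gl_fsetI A Phi Y b : belem_atom b \in A ->
  elem_gl Phi (Y `&` A) b = elem_gl Phi Y b.
Proof.
rewrite /elem_gl /neg_ok => bA.
case: b bA => -[[] a] /= aA; rewrite ?sat_lit_fsetI //;
  by case: ifP => //=; rewrite sat_lit_fsetI.
Qed.

Lemma elem_gl_atoms Phi Y b p : elem_gl Phi Y b = Some p -> all (pred1 (belem_atom b)) p.
Proof.
rewrite /elem_gl; case: b => -[[] a] /=; repeat case: ifP => // _;
  by move=> [<-] /=; rewrite ?eqxx.
Qed.

Lemma body_gl_fsetI A Phi Y bs : all (fun b => belem_atom b \in A) bs ->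
  body_gl Phi (Y `&` A) bs = body_gl Phi Y bs.
Proof.
elim: bs => [|b bs IH] //= /andP[bA bsA].
by rewrite !body_gl_cons elem_gl_fsetI // IH.
Qed.

Lemma body_gl_atoms A Phi Y bs p : all (fun b => belem_atom b \in A) bs ->
  body_gl Phi Y bs = Some p -> all (fun a => a \in A) p.
Proof.
elim: bs p => [|b bs IH] p /=; first by move=> _ [<-].
case/andP=> bA bsA; rewrite body_gl_cons.
case eb: (elem_gl Phi Y b) => [q|] //; case ebs: (body_gl Phi Y bs) => [q'|] //= [<-].
rewrite all_cat (IH q') // andbT.
by apply: sub_all (elem_gl_atoms eb) => a /eqP->.
Qed.

Definition rule_over A (r : erule atom) : bool :=
  all (fun a => a \in A) (ehead r) && all (fun b => belem_atom b \in A) (ebody r).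

Lemma erule_sat_fsetI A Phi Y X r : rule_over A r ->
  erule_sat Phi (Y `&` A) (X `&` A) r = erule_sat Phi Y X r.
Proof.
case/andP=> headA bodyA; rewrite /erule_sat body_gl_fsetI //.
case ep: (body_gl Phi Y (ebody r)) => [p|] //; have pA := body_gl_atoms bodyA ep.
congr (_ ==> _).
  by apply: eq_in_all => a /(allP pA) aA; rewrite /= in_fsetI aA andbT.
by apply: eq_in_has => a /(allP headA) aA; rewrite /= in_fsetI aA andbT.
Qed.

Lemma wf_rule_over P : wf_elp P -> all (rule_over (elp_atoms P)) (elp_rules P).
Proof. by case=> _; apply: sub_all => r /and3P[headA bodyA _]; apply/andP. Qed.

Lemma reduct_sat_fsetI P Phi Y X : wf_elp P ->
  reduct_sat P Phi (Y `&` elp_atoms P) (X `&` elp_atoms P) = reduct_sat P Phi Y X.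
Proof.
by move/wf_rule_over/eq_all_on; apply=> r /erule_sat_fsetI.
Qed.

Lemma reduct_sat_guess P Phi Phi' Y X : wf_elp P ->
  guess_free_on Y (elp_elits P) Phi Phi' -> reduct_sat P Phi Y X = reduct_sat P Phi' Y X.
Proof.
case=> _ /eq_all_on wfr free; apply: wfr => r /and3P[_ _ elitsE].
by rewrite /erule_sat (body_gl_guess free elitsE).
Qed.

End Semantics.

Section Forward.
Variable atom : choiceType.
Local Notation lit := (bool * atom)%type.
Implicit Types (Phi Psi : {fset lit}) (X Y M : {fset atom}) (P Q : elp atom).

Lemma reduct_sat_union P Q Phi Y X :
  reduct_sat (elp_union P Q) Phi Y X = reduct_sat P Phi Y X && reduct_sat Q Phi Y X.
Proof. exact: all_cat. Qed.

Lemma se_pair_union P Q Phi X Y :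
  se_pair (elp_union P Q) Phi X Y = se_pair P Phi X Y && se_pair Q Phi X Y.
Proof.
rewrite /se_pair !reduct_sat_union.
by case: (reduct_sat P _ _ _); case: (reduct_sat Q _ _ _); rewrite ?andbF.
Qed.

Lemma answer_set_union_congr P1 P2 Q Psi M :
  elp_atoms P1 = elp_atoms P2 ->
  (forall X Y, X `<=` Y -> se_pair P1 Psi X Y = se_pair P2 Psi X Y) ->
  answer_set (elp_reduct (elp_union P1 Q) Psi) M <->
  answer_set (elp_reduct (elp_union P2 Q) Psi) M.
Proof.
move=> sameA sameSE; rewrite !answer_setE /= sameA !se_pair_union sameSE //.
by split=> -[MA MM minM]; split=> // M' /[dup] /fproper_sub/sameSE eqM' /minM;
  rewrite !se_pair_union eqM'.
Qed.

Lemma se_pair_fsetI P Psi X Y : wf_elp P ->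
  se_pair P Psi X Y =
  se_pair P (Psi `&` elp_elits P) (X `&` elp_atoms P) (Y `&` elp_atoms P).
Proof.
move=> wfP; rewrite /se_pair !reduct_sat_fsetI //.
by rewrite !(@reduct_sat_guess _ P Psi (Psi `&` elp_elits P)) // => l lE;
  left; rewrite in_fsetI lE andbT.
Qed.

Lemma realizable_of_cwv P Q Psi Ic : wf_elp P -> cwv_with (elp_union P Q) Psi Ic ->
  realizable P (Psi `&` elp_elits P).
Proof.
move=> wfP [_ [IcE [[I0 IcI0] [PsiI notPsiI]]]].
have litA l : l \in elp_elits P -> l.2 \in elp_atoms P by case: wfP => + _; apply.
exists (fun J => exists2 I, Ic I & J = I `&` elp_atoms P); split; [|split; [|split]].
- move=> _ [I /IcE /answer_setE[_ + _] ->]; rewrite se_pair_union => /andP[II _].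
  apply/is_model_elp_reductE; split; first exact: fsubsetIr.
  by move: II; rewrite (se_pair_fsetI _ _ _ wfP) /se_pair andbb.
- by exists (I0 `&` elp_atoms P), I0.
- move=> l; rewrite in_fsetI => /andP[/PsiI[I [IcI unsatI]] lE].
  by exists (I `&` elp_atoms P); split; [exists I | rewrite sat_lit_fsetI ?litA].
- move=> l lE; rewrite in_fsetI lE andbT => lPsi _ [I IcI ->].
  by rewrite sat_lit_fsetI ?litA // (notPsiI l _ lPsi) // in_fsetU lE.
Qed.

Lemma same_SE_fun_se_model P1 P2 Phi :
  same_SE_fun P1 P2 -> Phi `<=` elp_elits P1 -> Phi `<=` elp_elits P2 ->
  realizable P1 Phi ->
  forall X Y, se_model (elp_reduct P1 Phi) X Y <-> se_model (elp_reduct P2 Phi) X Y.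
Proof.
move=> sameSE Phi1 Phi2 real1.
have [I [real2 _]] : exists I, SE_fun P2 Phi I I.
  have [Ic [models [[I IcI] _]]] := real1.
  exists I; apply/(sameSE _ Phi1 Phi2); split=> //.
  have /is_model_elp_reductE[IA II] := models I IcI.
  by apply/se_modelE; split; rewrite ?fsubset_refl // /se_pair II.
move=> X Y; split=> XY.
  by case: ((sameSE _ Phi1 Phi2 X Y).1 (conj real1 XY)).
by case: ((sameSE _ Phi1 Phi2 X Y).2 (conj real2 XY)).
Qed.

Lemma cwv_union_transfer P1 P2 Q Ic : wf_elp P1 -> wf_elp P2 ->
  elp_atoms P1 = elp_atoms P2 -> elp_elits P1 = elp_elits P2 ->
  same_SE_fun P1 P2 -> is_cwv (elp_union P1 Q) Ic -> is_cwv (elp_union P2 Q) Ic.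
Proof.
move=> wf1 wf2 sameA sameE sameSE [Psi cwv1]; have [PsiE [IcE compat]] := cwv1.
set Phi := Psi `&` elp_elits P1.
have PhiE1 : Phi `<=` elp_elits P1 by apply: fsubsetIr.
have PhiE2 : Phi `<=` elp_elits P2 by rewrite -sameE.
have sameSEPhi := same_SE_fun_se_model sameSE PhiE1 PhiE2 (realizable_of_cwv wf1 cwv1).
have same_pairs X Y : X `<=` Y -> se_pair P1 Psi X Y = se_pair P2 Psi X Y.
  move=> XY; rewrite (se_pair_fsetI _ _ _ wf1) (se_pair_fsetI _ _ _ wf2) -sameA -sameE.
  have XYA : X `&` elp_atoms P1 `<=` Y `&` elp_atoms P1 by apply: fsetSI.
  have YA1 : Y `&` elp_atoms P1 `<=` elp_atoms P1 by apply: fsubsetIr.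
  have YA2 : Y `&` elp_atoms P1 `<=` elp_atoms P2 by rewrite -sameA.
  apply/idP/idP => pair.
    by have /se_modelE/sameSEPhi/se_modelE[] := And3 XYA YA1 pair.
  by have /se_modelE/sameSEPhi/se_modelE[] := And3 XYA YA2 pair.
exists Psi; split; first by rewrite /= -sameE.
split; last by rewrite /= -sameE.
by move=> I; rewrite IcE; apply: answer_set_union_congr.
Qed.

Lemma compatible_guess_sub Ic Phi Phi' E : Phi `<=` E ->
  compatible Ic Phi E -> compatible Ic Phi' E -> Phi `<=` Phi'.
Proof.
move=> /fsubsetP PhiE [_ [PhiI _]] [_ [_ notPhi'I]]; apply/fsubsetP => l lPhi.
have [I [IcI unsatI]] := PhiI l lPhi; apply: contraLR unsatI => lPhi'.
by rewrite negbK (notPhi'I l (PhiE _ lPhi)).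
Qed.

Lemma compatible_guess_uniq Ic Phi Phi' E : Phi `<=` E -> Phi' `<=` E ->
  compatible Ic Phi E -> compatible Ic Phi' E -> Phi = Phi'.
Proof.
move=> PhiE Phi'E c c'; apply/eqP; rewrite eqEfsubset.
by rewrite (compatible_guess_sub PhiE c c') (compatible_guess_sub Phi'E c' c).
Qed.

Lemma cwv_with_guess_uniq P Q Phi Phi' Ic : elp_elits P = elp_elits Q ->
  cwv_with P Phi Ic -> cwv_with Q Phi' Ic -> Phi = Phi'.
Proof.
by move=> sameE [PhiE [_ c]] [Phi'E [_ c']]; rewrite sameE in PhiE c;
  apply: compatible_guess_uniq c c'.
Qed.

Lemma wv_of_cwv_equiv P Q Ic : elp_elits P = elp_elits Q -> cwv_equiv P Q ->
  is_wv P Ic -> is_wv Q Ic.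
Proof.
move=> sameE equiv [Phi [cwvP maxP]].
have [Phi0 cwvQ] := (equiv Ic).1 (ex_intro _ Phi cwvP).
have ePhi := cwv_with_guess_uniq sameE cwvP cwvQ; subst Phi0.
exists Phi; split=> // Phi' Ic' cwvQ'.
have [Phi'' cwvP'] := (equiv Ic').2 (ex_intro _ Phi' cwvQ').
have ePhi' := cwv_with_guess_uniq sameE cwvP' cwvQ'; subst Phi''.
exact: maxP cwvP'.
Qed.

Lemma cwv_equiv_wv_equiv P Q : elp_elits P = elp_elits Q -> cwv_equiv P Q -> wv_equiv P Q.
Proof.
move=> sameE equiv Ic; split; first exact: wv_of_cwv_equiv.
by apply: wv_of_cwv_equiv => // J; apply: iff_sym.
Qed.

Lemma same_SE_fun_sym P1 P2 :
  same_SE_fun P1 P2 -> same_SE_fun P2 P1.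
Proof. by move=> sameSE Phi PhiE2 PhiE1 X Y; apply: iff_sym; apply: sameSE. Qed.

Lemma strong_elp_cwv_of_same_SE_fun P1 P2 :
  wf_elp P1 -> wf_elp P2 -> elp_atoms P1 = elp_atoms P2 -> elp_elits P1 = elp_elits P2 ->
  same_SE_fun P1 P2 -> strong_elp_cwv_equiv P1 P2.
Proof.
move=> wf1 wf2 sameA sameE sameSE Q _ Ic; split; first exact: cwv_union_transfer.
exact: cwv_union_transfer (esym sameA) (esym sameE) (same_SE_fun_sym sameSE).
Qed.

End Forward.

Lemma all_flatten (T : Type) (p : pred T) ss : all p (flatten ss) = all (all p) ss.
Proof. by elim: ss => //= s ss IH; rewrite all_cat IH. Qed.

Lemma inj_in_of_map_uniq (T1 T2 : eqType) (f : T1 -> T2) (s : seq T1) :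
  uniq (map f s) -> {in s &, injective f}.
Proof.
elim: s => //= x s IH /andP[fx_new uniq_s] y z.
rewrite !inE => /predU1P[->|ys] /predU1P[->|zs] // eq_f.
- by move: fx_new; rewrite eq_f map_f.
- by move: fx_new; rewrite -eq_f map_f.
- exact: IH.
Qed.

Lemma fsetU1I_notin (K : choiceType) (c : K) (Z B : {fset K}) :
  c \notin B -> (c |` Z) `&` B = Z `&` B.
Proof.
move=> cB; apply/fsetP => z; rewrite !inE.
by case: eqP => [->|//]; rewrite (negbTE cB) !andbF.
Qed.

Lemma fproperU1 (K : choiceType) (c : K) (X Y : {fset K}) :
  X `<` Y -> c \notin Y -> c |` X `<` c |` Y.
Proof.
move=> XY cY; have cX : c \notin X := contra (fsubsetP (fproper_sub XY) c) cY.
rewrite fproperEneq fsetUS ?fproper_sub // andbT.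
apply: contraTneq XY => eqU.
by rewrite -(fsetU1K cX) -(fsetU1K cY) eqU fproperEneq eqxx.
Qed.

Section Gadget.
Variable atom : choiceType.
Implicit Types (Phi : {fset bool * atom}) (A X Y M : {fset atom}).

Definition asp_rule (h pos neg : seq atom) : erule atom :=
  ERule h ([seq BLit (true, a) | a <- pos] ++ [seq BLit (false, b) | b <- neg]).

Lemma erule_sat_asp_rule Phi Y X h pos neg :
  erule_sat Phi Y X (asp_rule h pos neg) =
  (all (fun a => a \in X) pos && all (fun b => b \notin Y) neg) ==> has (fun a => a \in X) h.
Proof.
rewrite /erule_sat; have -> : body_gl Phi Y (ebody (asp_rule h pos neg)) =
          if all (fun b => b \notin Y) neg then Some pos else None.
  elim: pos => [|a pos IH] /=; last by rewrite body_gl_cons IH; case: all.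
  elim: neg => [|b neg IH] //=; rewrite body_gl_cons IH /elem_gl /neg_ok /sat_lit /=.
  by case: (b \in Y); case: all.
by case: all; rewrite ?andbT ?andbF.
Qed.

(* A gadget [(c, (X, Y))] tests the pair [(X, Y)] under the fresh tag atom [c]. *)
Definition gadget := (atom * ({fset atom} * {fset atom}))%type.
Local Notation tag t := (t : gadget).1.
Local Notation lo t := (t : gadget).2.1.
Local Notation hi t := (t : gadget).2.2.

Definition gadget_rules A (t : gadget) : seq (erule atom) :=
  let D := hi t `\` lo t in
  [seq asp_rule [:: a] [:: tag t] [::] | a <- lo t] ++
  [seq asp_rule [:: a] [:: b; tag t] [::] | a <- D, b <- D] ++
  [seq asp_rule [::] [:: tag t; a] [::] | a <- A `\` hi t] ++
  [seq asp_rule [::] [:: tag t] [:: b] | b <- D].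

Definition gadget_ok A Y X (t : gadget) : Prop :=
  let D := hi t `\` lo t in
  [/\ lo t `<=` X, {in D &, forall a b, b \in X -> a \in X},
      {in A `\` hi t, forall a, a \notin X} & D `<=` Y].

Lemma gadget_rules_sat A Phi Y X t :
  all (erule_sat Phi Y X) (gadget_rules A t) <-> (tag t \in X -> gadget_ok A Y X t).
Proof.
rewrite /gadget_rules /gadget_ok !all_cat !all_map; set D := hi t `\` lo t.
split=> [/and4P[loX /all_allpairsP DX outA DY] tX|ok]; first split.
- apply/fsubsetP => a /(allP loX); by rewrite /= erule_sat_asp_rule /= tX orbF.
- move=> a b aD bD bX; have := DX a b aD bD.
  by rewrite /= erule_sat_asp_rule /= bX tX orbF.
- move=> a /(allP outA); by rewrite /= erule_sat_asp_rule /= tX; case: (a \in X).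
- apply/fsubsetP => b /(allP DY); by rewrite /= erule_sat_asp_rule /= tX; case: (b \in Y).
case tX: (tag t \in X); last first.
  apply/and4P; split; first by apply/allP => a _; rewrite /= erule_sat_asp_rule /= tX.
  - by apply/all_allpairsP => a b _ _; rewrite /= erule_sat_asp_rule /= tX !andbF.
  - by apply/allP => a _; rewrite /= erule_sat_asp_rule /= tX.
  - by apply/allP => b _; rewrite /= erule_sat_asp_rule /= tX.
have [loX DX outA DY] := ok tX; apply/and4P; split.
- by apply/allP => a aLo; rewrite /= erule_sat_asp_rule /= (fsubsetP loX a aLo) implybT.
- apply/all_allpairsP => a b aD bD; rewrite /= erule_sat_asp_rule /=.
  by case bX: (b \in X); rewrite ?(DX a b aD bD bX) /= ?implybT.
- by apply/allP => a aout; rewrite /= erule_sat_asp_rule /= (negbTE (outA a aout)) andbF.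
- by apply/allP => b bD; rewrite /= erule_sat_asp_rule /= (fsubsetP DY b bD) andbF.
Qed.

Definition gadget_atoms A (T : seq gadget) : {fset atom} := A `|` seq_fset tt (map fst T).

Definition gadget_prog A (T : seq gadget) : elp atom :=
  ELP (gadget_atoms A T) fset0
    (asp_rule (map fst T) [::] [::] ::
     [seq asp_rule [::] [:: x; y] [::] | x <- map fst T, y <- [seq y <- map fst T | y != x]] ++
     flatten [seq gadget_rules A t | t <- T]).

Lemma gadget_prog_sat A T Phi Y X : reduct_sat (gadget_prog A T) Phi Y X <->
  [/\ has (fun c => c \in X) (map fst T),
      {in map fst T &, forall x y, x \in X -> y \in X -> x = y} &
      forall t, t \in T -> tag t \in X -> gadget_ok A Y X t].
Proof.
rewrite /reduct_sat /= erule_sat_asp_rule /= all_cat [in X in _ && (_ && X)]all_flatten all_map.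
split=> [/and3P[someX /all_allpairsP oneX /allP gadgetsX]|[someX oneX gadgetsX]].
  split=> // [x y xT yT xX yX|t tT]; last exact/gadget_rules_sat/gadgetsX.
  apply: contraTeq isT => /negPf yx; have := oneX x y xT.
  by rewrite mem_filter eq_sym yx yT erule_sat_asp_rule /= xX yX => /(_ isT).
apply/and3P; split=> //.
  apply/all_allpairsP => x y xT; rewrite mem_filter => /andP[yx yT].
  rewrite erule_sat_asp_rule /= !andbT implybF; apply/andP => -[xX yX].
  by rewrite (oneX x y xT yT xX yX) eqxx in yx.
by apply/allP => t tT; apply/gadget_rules_sat/gadgetsX.
Qed.

Lemma gadget_prog_rulesP A T (p : pred (erule atom)) :
  (forall t, t \in T -> lo t `<=` hi t /\ hi t `<=` A) ->
  (forall h pos neg, {subset h <= gadget_atoms A T} -> {subset pos <= gadget_atoms A T} ->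
     {subset neg <= gadget_atoms A T} -> p (asp_rule h pos neg)) ->
  all p (elp_rules (gadget_prog A T)).
Proof.
set B := gadget_atoms A T => bounds pB.
have tagB x : x \in map fst T -> x \in B by move=> xT; rewrite in_fsetU seq_fsetE xT orbT.
have AB a : a \in A -> a \in B by move=> aA; rewrite in_fsetU aA.
have sub0 : {subset [::] <= B} by [].
have sub1 x : x \in B -> {subset [:: x] <= B} by move=> xB z; rewrite mem_seq1 => /eqP->.
have sub2 x y : x \in B -> y \in B -> {subset [:: x; y] <= B}.
  by move=> xB yB z; rewrite in_cons mem_seq1 => /predU1P[->|/eqP->].
rewrite /= all_cat [in X in _ && (_ && X)]all_flatten all_map.
apply/and3P; split; first exact: (pB _ _ _ tagB sub0 sub0).
  apply/all_allpairsP => x y xT; rewrite mem_filter => /andP[_ yT].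
  exact: (pB _ _ _ sub0 (sub2 _ _ (tagB _ xT) (tagB _ yT)) sub0).
apply/allP => t tT /=; have tB := tagB _ (map_f fst tT).
have [lohi hiA] := bounds t tT.
have hiB : {subset hi t <= B} by move=> a /(fsubsetP hiA) /AB.
have DB : {subset hi t `\` lo t <= B} by move=> a /[!in_fsetD] /andP[_ /hiB].
rewrite /gadget_rules !all_cat !all_map; apply/and4P; split.
- apply/allP => a /(fsubsetP lohi) /hiB aB; exact: (pB _ _ _ (sub1 _ aB) (sub1 _ tB) sub0).
- apply/all_allpairsP => a b /DB aB /DB bB.
  exact: (pB _ _ _ (sub1 _ aB) (sub2 _ _ bB tB) sub0).
- apply/allP => a /[!in_fsetD] /andP[_ /AB aB]; exact: (pB _ _ _ sub0 (sub2 _ _ tB aB) sub0).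
- apply/allP => b /DB bB; exact: (pB _ _ _ sub0 (sub1 _ tB) (sub1 _ bB)).
Qed.

Lemma gadget_prog_wf A T : (forall t, t \in T -> lo t `<=` hi t /\ hi t `<=` A) ->
  wf_elp (gadget_prog A T).
Proof.
move=> bounds; split=> [l|]; first by rewrite in_fset0.
apply: gadget_prog_rulesP => // h pos neg hB posB negB.
rewrite /asp_rule /= !all_cat !all_map; apply/and3P; split; first exact/allP.
  by apply/andP; split; apply/allP.
by apply/andP; split; apply/allP.
Qed.

Lemma gadget_prog_plain A T : (forall t, t \in T -> lo t `<=` hi t /\ hi t `<=` A) ->
  is_plain (gadget_prog A T).
Proof.
move=> bounds; split=> //; apply: gadget_prog_rulesP => // h pos neg _ _ _.
by rewrite /asp_rule /= all_cat !all_map; apply/andP; split; apply/allP.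
Qed.

Lemma fresh_gadgets A (gs : seq ({fset atom} * {fset atom})) :
  (forall s : {fset atom}, exists a, a \notin s) ->
  exists T : seq gadget,
    [/\ map snd T = gs, uniq (map fst T) & forall t, t \in T -> tag t \notin A].
Proof.
move=> infinite; elim: gs => [|g gs [T [eT uniqT freshT]]]; first by exists [::].
have [a] := infinite (gadget_atoms A T); rewrite in_fsetU seq_fsetE negb_or.
case/andP=> aA aT; exists ((a, g) :: T); split; rewrite /= ?eT ?aT //.
by move=> t; rewrite inE => /predU1P[->|/freshT].
Qed.

Definition gadget_answer P Phi X Y : bool :=
  reduct_sat P Phi Y Y && ~~ ((X `<` Y) && reduct_sat P Phi Y X).

Section GadgetUnion.
Variables (P : elp atom) (T : seq gadget).
Local Notation A := (elp_atoms P).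
Local Notation Q := (gadget_prog A T).
Hypotheses (wfP : wf_elp P) (uniq_tags : uniq (map fst T))
  (fresh_tags : forall t, t \in T -> tag t \notin A)
  (gadget_bounds : forall t, t \in T -> lo t `<=` hi t /\ hi t `<=` A).

Lemma reduct_sat_tagged Phi c Y X : c \notin A ->
  reduct_sat P Phi (c |` Y) (c |` X) = reduct_sat P Phi Y X.
Proof.
by move=> cA; rewrite -reduct_sat_fsetI // !fsetU1I_notin // reduct_sat_fsetI.
Qed.

Lemma in_tagged t z Z : t \in T -> z \in A -> (z \in tag t |` Z) = (z \in Z).
Proof.
move=> tT zA; rewrite in_fset1U; case: eqP => // zt.
by move: (fresh_tags tT); rewrite -zt zA.
Qed.

Lemma tag_uniq t t' Z : t \in T -> t' \in T -> Z `<=` A ->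
  tag t' \in tag t |` Z -> t' = t.
Proof.
move=> tT t'T ZA; rewrite in_fset1U => /predU1P[|t'Z].
  exact: (inj_in_of_map_uniq uniq_tags t'T tT).
by move: (fresh_tags t'T); rewrite (fsubsetP ZA _ t'Z).
Qed.

Lemma elp_atoms_gadget_union : elp_atoms (elp_union P Q) = gadget_atoms A T.
Proof. by rewrite /= fsetUA fsetUid. Qed.

Lemma tagged_sub_gadget_atoms t Z : t \in T -> Z `<=` A -> tag t |` Z `<=` gadget_atoms A T.
Proof.
move=> tT ZA; apply/fsubsetP => z; rewrite /gadget_atoms in_fset1U in_fsetU seq_fsetE.
by case/predU1P=> [->|/(fsubsetP ZA)->]; rewrite ?map_f ?orbT.
Qed.

Lemma gadget_prog_sat_shape Phi Y X : X `<=` gadget_atoms A T -> reduct_sat Q Phi Y X ->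
  exists2 t, t \in T & (X = tag t |` lo t \/ X = tag t |` hi t) /\ hi t `\` lo t `<=` Y.
Proof.
move=> XA /gadget_prog_sat[/hasP[_ /mapP[t tT ->] tX] oneX gadgetsX].
have [loX DX outX DY] := gadgetsX t tT tX; exists t => //; split=> //.
have inX z : z \in X -> z = tag t \/ z \in hi t.
  move=> zX; move: (fsubsetP XA z zX); rewrite /gadget_atoms in_fsetU seq_fsetE.
  case/orP=> [zA|zT]; [right | by left; apply: oneX; rewrite ?map_f].
  by apply: contraT => zhi; have := outX z; rewrite in_fsetD zhi zA zX => /(_ isT).
have [hiX|/fsubsetPn[b bhi bX]] := boolP (hi t `<=` X); [right | left]; apply/fsetP => z.
  apply/idP/idP => [/inX[->|zhi]|/fset1UP[->//|/(fsubsetP hiX)//]].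
    exact: fset1U1.
  by rewrite in_fset1U zhi orbT.
have blo : b \notin lo t by apply: contra bX; apply/fsubsetP.
apply/idP/idP => [zX|/fset1UP[->//|/(fsubsetP loX)//]]; rewrite in_fset1U.
case: (inX z zX) => [->|zhi]; first by rewrite eqxx.
apply/orP; right; apply: contraT => zlo.
by move: bX; rewrite (DX b z) // in_fsetD ?zlo ?blo.
Qed.

Lemma reduct_sat_union_tagged Phi t Z : t \in T -> Z = lo t \/ Z = hi t ->
  reduct_sat (elp_union P Q) Phi (tag t |` hi t) (tag t |` Z) = reduct_sat P Phi (hi t) Z.
Proof.
move=> tT eZ; have [lohi hiA] := gadget_bounds tT.
have [loZ Zhi] : lo t `<=` Z /\ Z `<=` hi t by case: eZ => ->.
have ZA := fsubset_trans Zhi hiA.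
rewrite reduct_sat_union reduct_sat_tagged ?fresh_tags // andb_idr // => _.
apply/gadget_prog_sat; split.
- by apply/hasP; exists (tag t); [apply: map_f | apply: fset1U1].
- move=> x y /mapP[u uT ->] /mapP[v vT ->] uZ vZ.
  by rewrite (tag_uniq tT uT ZA uZ) (tag_uniq tT vT ZA vZ).
move=> u uT uZ; rewrite (tag_uniq tT uT ZA uZ); split.
- exact: fsubset_trans loZ (fsubsetU1 _ _).
- move=> a b /[!in_fsetD] /andP[_ ahi] /andP[blo bhi].
  rewrite !in_tagged ?(fsubsetP hiA) //; case: eZ => -> //.
  by rewrite (negbTE blo).
- move=> a /[!in_fsetD] /andP[ahi aA]; rewrite in_tagged //.
  by apply: contra ahi; apply/fsubsetP.
- exact: fsubset_trans (fsubsetDl _ _) (fsubsetU1 _ _).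
Qed.

Lemma gadget_union_model Phi M : M `<=` elp_atoms (elp_union P Q) ->
  reduct_sat (elp_union P Q) Phi M M <->
  exists2 t, t \in T & M = tag t |` hi t /\ reduct_sat P Phi (hi t) (hi t).
Proof.
rewrite elp_atoms_gadget_union => MA; split=> [|[t tT [-> hiSat]]]; last first.
  by rewrite reduct_sat_union_tagged //; right.
rewrite reduct_sat_union => /andP[PM /(gadget_prog_sat_shape MA)[t tT [eM DM]]].
have {}eM : M = tag t |` hi t.
  case: eM => // eM; rewrite eM; apply/eqP; rewrite eqEfsubset fsetUS ?(gadget_bounds tT).1 //.
  apply/fsubsetP => z /[!in_fset1U] /predU1P[->|zhi]; first by rewrite eqxx.
  case zlo: (z \in lo t); first by rewrite orbT.
  by move: (fsubsetP DM z); rewrite in_fsetD zlo zhi eM in_fset1U zlo => /(_ isT).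
by exists t => //; split=> //; move: PM; rewrite eM reduct_sat_tagged ?fresh_tags.
Qed.

Lemma gadget_union_proper_sub Phi t : t \in T ->
  (exists2 M', M' `<` tag t |` hi t & reduct_sat (elp_union P Q) Phi (tag t |` hi t) M') <->
  lo t `<` hi t /\ reduct_sat P Phi (hi t) (lo t).
Proof.
move=> tT; have [lohi hiA] := gadget_bounds tT.
split=> [[M' ltM']|[ltlohi loSat]]; last first.
  exists (tag t |` lo t); last by rewrite reduct_sat_union_tagged //; left.
  exact: fproperU1 ltlohi (contra (fsubsetP hiA _) (fresh_tags tT)).
have M'A := fsubset_trans (fproper_sub ltM') (tagged_sub_gadget_atoms tT hiA).
rewrite reduct_sat_union => /andP[PM' /(gadget_prog_sat_shape M'A)[u uT [eM' _]]].
have ut : u = t.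
  apply: tag_uniq hiA _ => //; apply: (fsubsetP (fproper_sub ltM')).
  by case: eM' => ->; apply: fset1U1.
subst u; case: eM' => eM'; subst M'; last by rewrite fproperEneq eqxx in ltM'.
split; last by rewrite reduct_sat_tagged ?fresh_tags in PM'.
by rewrite fproperEneq lohi andbT; apply: contraTneq ltM' => ->; rewrite fproperEneq eqxx.
Qed.

Lemma answer_set_gadget_union Phi M :
  answer_set (elp_reduct (elp_union P Q) Phi) M <->
  exists2 t, t \in T & M = tag t |` hi t /\ gadget_answer P Phi (lo t) (hi t).
Proof.
rewrite answer_setE /se_pair andbb; split.
  case=> MA /[dup] MM /(gadget_union_model _ MA)[t tT [eM hiSat]] minM.
  exists t => //; split=> //; rewrite /gadget_answer hiSat /=.
  apply/negP => /andP[ltlohi loSat].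
  have [M' ltM' M'sat] := (gadget_union_proper_sub Phi tT).2 (conj ltlohi loSat).
  by rewrite -eM in ltM' M'sat; have := minM M' ltM'; rewrite MM M'sat.
case=> t tT [-> /andP[hiSat noSub]]; have [_ hiA] := gadget_bounds tT.
have MA := tagged_sub_gadget_atoms tT hiA; rewrite -elp_atoms_gadget_union in MA.
have MM := (gadget_union_model Phi MA).2 (ex_intro2 _ _ t tT (conj erefl hiSat)).
split=> // M' ltM'; rewrite MM /=; apply: contra noSub => M'sat.
by apply/andP/(gadget_union_proper_sub Phi tT); exists M'.
Qed.

End GadgetUnion.

End Gadget.

Section Separation.
Variable atom : choiceType.
Local Notation lit := (bool * atom)%type.
Local Notation tag t := (t : gadget atom).1.
Local Notation lo t := (t : gadget atom).2.1.
Local Notation hi t := (t : gadget atom).2.2.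

(* A finite witness, so that the separating program built from it is finite. *)
Lemma realizable_seq (P : elp atom) Phi : realizable P Phi ->
  exists W : seq {fset atom}, (forall I, I \in W -> is_model (elp_reduct P Phi) I) /\
    compatible (fun I => I \in W) Phi (elp_elits P).
Proof.
case=> Ic [models [[I0 IcI0] [PhiI notPhiI]]].
have witnesses (s : seq lit) : {subset s <= Phi} ->
    exists W : seq {fset atom}, (forall I, I \in W -> Ic I) /\
      {in s, forall l, exists2 I, I \in W & ~~ sat_lit I l}.
  elim: s => [|l s IH] sPhi; first by exists [::].
  have [W [WIc Wwit]] := IH (fun x xs => sPhi x (mem_behead (s := l :: s) xs)).
  have [I [IcI unsatI]] := PhiI l (sPhi l (mem_head l s)).
  exists (I :: W); split=> [J /predU1P[->//|/WIc//]|x /predU1P[->|/Wwit[J JW unsatJ]]].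
    by exists I; rewrite ?mem_head.
  by exists J; rewrite // inE JW orbT.
have [W [WIc Wwit]] := witnesses (enum_fset Phi) (fun l => id).
exists (I0 :: W); split=> [I /predU1P[->|/WIc]|]; [exact: models..|split; [|split]].
- by exists I0; rewrite mem_head.
- by move=> l /Wwit[J JW unsatJ]; exists J; rewrite inE JW orbT.
- by move=> l lE lPhi I /predU1P[->|/WIc]; apply: notPhiI.
Qed.

Definition separates (P P' : elp atom) : Prop :=
  exists Q, [/\ wf_elp Q, is_plain Q &
    exists Ic, is_wv (elp_union P Q) Ic /\ ~ is_cwv (elp_union P' Q) Ic].

Section SeparatingGadget.
Variables (P P' : elp atom) (Phi : {fset lit}) (W : seq {fset atom}) (X0 Y0 : {fset atom}).
Variable T : seq (gadget atom).
Local Notation A := (elp_atoms P).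
Local Notation E := (elp_elits P).
Local Notation Q := (gadget_prog A T).
Hypotheses (wfP : wf_elp P) (wfP' : wf_elp P') (PhiE : Phi `<=` E)
  (sameA : elp_atoms P' = A) (sameE : elp_elits P' = E).
Hypotheses (W_models : forall I, I \in W -> is_model (elp_reduct P Phi) I)
  (W_compat : compatible (fun I => I \in W) Phi E).
Hypotheses (X0Y0 : X0 `<=` Y0) (Y0A : Y0 `<=` A).
Hypotheses (T_gadgets : map snd T = [seq (Z, Z) | Z <- W] ++ [:: (X0, Y0)])
  (uniq_tags : uniq (map fst T)) (fresh_tags : forall t, t \in T -> tag t \notin A).

Lemma gadget_cases t : t \in T -> (exists2 I, I \in W & t.2 = (I, I)) \/ t.2 = (X0, Y0).
Proof.
move=> tT; have : t.2 \in map snd T by apply: map_f.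
by rewrite T_gadgets mem_cat mem_seq1 => /orP[/mapP[I IW ->]|/eqP->]; [left; exists I | right].
Qed.

Lemma gadget_exists g : g \in [seq (Z, Z) | Z <- W] ++ [:: (X0, Y0)] ->
  exists2 t, t \in T & t.2 = g.
Proof. by rewrite -T_gadgets => /mapP[t tT ->]; exists t. Qed.

Lemma sep_gadget_bounds t : t \in T -> lo t `<=` hi t /\ hi t `<=` A.
Proof.
case/gadget_cases => [[I IW ->]|->] //=; split=> //.
by have /is_model_elp_reductE[] := W_models IW.
Qed.

Lemma sep_answer_set (R : elp atom) Psi M : wf_elp R -> elp_atoms R = A ->
  answer_set (elp_reduct (elp_union R Q) Psi) M <->
  exists2 t, t \in T & M = tag t |` hi t /\ gadget_answer R Psi (lo t) (hi t).
Proof.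
move=> wfR RA; rewrite -RA; apply: answer_set_gadget_union; rewrite ?RA //.
exact: sep_gadget_bounds.
Qed.

Local Notation Ic := (fun M => answer_set (elp_reduct (elp_union P Q) Phi) M).

Lemma sat_lit_tagged t Z l : t \in T -> l \in E -> sat_lit (tag t |` Z) l = sat_lit Z l.
Proof.
move=> tT lE; have lA : l.2 \in A by case: wfP => + _; apply.
by rewrite /sat_lit (in_tagged fresh_tags).
Qed.

Lemma W_answer I : I \in W -> exists2 t, t \in T & Ic (tag t |` I).
Proof.
move=> IW; have [|t tT et] := gadget_exists (g := (I, I)); first by rewrite mem_cat map_f.
exists t => //; apply/(sep_answer_set _ _ wfP) => //; exists t; rewrite // et.
have /is_model_elp_reductE[_ II] := W_models IW.
by split=> //; rewrite /gadget_answer II fproperEneq eqxx.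
Qed.

Hypothesis answer_Y0 :
  gadget_answer P Phi X0 Y0 <-> {in E, forall l, l \notin Phi -> sat_lit Y0 l}.

Lemma sep_compatible : compatible Ic Phi (elp_elits (elp_union P Q)).
Proof.
have [[I IW] [PhiW notPhiW]] := W_compat.
split; [|split].
- by have [t _ IcM] := W_answer IW; exists (tag t |` I).
- move=> l lPhi; have [J [JW unsatJ]] := PhiW l lPhi; have [t tT IcM] := W_answer JW.
  by exists (tag t |` J); rewrite sat_lit_tagged ?(fsubsetP PhiE).
move=> l; rewrite /= fsetU0 => lE lPhi M /(sep_answer_set _ _ wfP)[//|t tT [-> ga]].
rewrite sat_lit_tagged //; case: (gadget_cases tT) => [[J JW e]|e]; rewrite e in ga *.
  exact: notPhiW.
exact: answer_Y0.1.
Qed.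

Lemma sep_cwv : cwv_with (elp_union P Q) Phi Ic.
Proof. by split; [rewrite /= fsetU0 | split; [|exact: sep_compatible]]. Qed.

Lemma sep_wv : is_wv (elp_union P Q) Ic.
Proof.
exists Phi; split; first exact: sep_cwv.
move=> Phi' Ic' [Phi'E [Ic'E [_ [Phi'I _]]]]; apply/negP => ltPhi.
rewrite /= fsetU0 in Phi'E.
(* Only the gadget for (X0, Y0) can violate a literal of Phi' outside Phi. *)
have key l : l \in Phi' -> l \notin Phi -> ~~ sat_lit Y0 l /\ gadget_answer P Phi' X0 Y0.
  move=> lPhi' lPhi; have lE := fsubsetP Phi'E l lPhi'.
  have [M [/Ic'E/(sep_answer_set _ _ wfP)[//|t tT [-> ga]] unsat]] := Phi'I l lPhi'.
  rewrite sat_lit_tagged // in unsat.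
  case: (gadget_cases tT) => [[J JW e]|e]; rewrite e in ga unsat => //.
  by rewrite (W_compat.2.2 l lE lPhi J JW) in unsat.
have [l0 l0Phi' l0Phi] : exists2 l, l \in Phi' & l \notin Phi.
  by apply/fsubsetPn; move: ltPhi; rewrite fproperE => /andP[].
have [unsat0 ga'] := key l0 l0Phi' l0Phi.
have free : guess_free_on Y0 E Phi Phi'.
  move=> l lE; case lPhi: (l \in Phi).
    by left; rewrite (fsubsetP (fproper_sub ltPhi) _ lPhi).
  by case lPhi': (l \in Phi'); [right; apply: (key l lPhi' (negbT lPhi)).1 | left].
have ga : gadget_answer P Phi X0 Y0.
  by move: ga'; rewrite /gadget_answer -!(reduct_sat_guess _ wfP free).
by rewrite (answer_Y0.1 ga l0 (fsubsetP Phi'E _ l0Phi') l0Phi) in unsat0.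
Qed.

Hypothesis answer_Y0_differs :
  realizable P' Phi -> gadget_answer P Phi X0 Y0 != gadget_answer P' Phi X0 Y0.

Lemma sep_not_cwv : ~ is_cwv (elp_union P' Q) Ic.
Proof.
case=> Psi cwv'; have sameEU : elp_elits (elp_union P Q) = elp_elits (elp_union P' Q).
  by rewrite /= sameE.
have ePsi := cwv_with_guess_uniq sameEU sep_cwv cwv'; subst Psi.
have real' : realizable P' Phi.
  by have := realizable_of_cwv wfP' cwv'; rewrite (fsetIidPl _) // sameE.
have [|t0 t0T et0] := gadget_exists (g := (X0, Y0)); first by rewrite mem_cat mem_seq1 eqxx orbT.
have answer_t0 R : wf_elp R -> elp_atoms R = A ->
    answer_set (elp_reduct (elp_union R Q) Phi) (tag t0 |` Y0) <-> gadget_answer R Phi X0 Y0.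
  move=> wfR RA; rewrite sep_answer_set //; split=> [[t tT [eM ga]]|ga]; last first.
    by exists t0; rewrite ?et0.
  have tag_t : tag t \in tag t0 |` Y0 by rewrite eM fset1U1.
  by move: ga; rewrite (tag_uniq uniq_tags fresh_tags t0T tT Y0A tag_t) et0.
apply: (negP (answer_Y0_differs real')); apply/eqP; apply/idP/idP => ga.
  by apply/(answer_t0 P' wfP' sameA)/(cwv'.2.1 _).1/(answer_t0 P wfP erefl).
by apply/(answer_t0 P wfP erefl)/(cwv'.2.1 _).2/(answer_t0 P' wfP' sameA).
Qed.

Lemma gadget_separates : separates P P'.
Proof.
exists Q; split.
- exact/gadget_prog_wf/sep_gadget_bounds.
- exact/gadget_prog_plain/sep_gadget_bounds.
by exists Ic; split; [exact: sep_wv | exact: sep_not_cwv].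
Qed.

End SeparatingGadget.

Lemma separates_of_gadget_answer (P P' : elp atom) Phi X0 Y0 :
  (forall s : {fset atom}, exists a, a \notin s) ->
  wf_elp P -> wf_elp P' -> elp_atoms P' = elp_atoms P -> elp_elits P' = elp_elits P ->
  Phi `<=` elp_elits P -> realizable P Phi -> X0 `<=` Y0 -> Y0 `<=` elp_atoms P ->
  (gadget_answer P Phi X0 Y0 <-> {in elp_elits P, forall l, l \notin Phi -> sat_lit Y0 l}) ->
  (realizable P' Phi -> gadget_answer P Phi X0 Y0 != gadget_answer P' Phi X0 Y0) ->
  separates P P'.
Proof.
move=> infinite wfP wfP' sameA sameE PhiE /realizable_seq[W [W_models W_compat]].
move=> X0Y0 Y0A answer_Y0 answer_Y0_differs.
have [T [T_gadgets uniq_tags fresh_tags]] :=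
  fresh_gadgets (elp_atoms P) ([seq (Z, Z) | Z <- W] ++ [:: (X0, Y0)]) infinite.
exact: (gadget_separates wfP wfP' PhiE sameA sameE W_models W_compat X0Y0 Y0A T_gadgets
  uniq_tags fresh_tags answer_Y0 answer_Y0_differs).
Qed.

End Separation.

Section Backward.
Variable atom : choiceType.
Implicit Types (P Q : elp atom).

Lemma se_model_gadget_answer P1 P2 Phi X Y : elp_atoms P1 = elp_atoms P2 ->
  se_model (elp_reduct P1 Phi) X Y -> ~ se_model (elp_reduct P2 Phi) X Y ->
  exists2 X0, X0 `<=` Y & gadget_answer P1 Phi X0 Y != gadget_answer P2 Phi X0 Y.
Proof.
move=> sameA /se_modelE[XY YA /andP[YY1 XY1]] notse2.
case YY2: (reduct_sat P2 Phi Y Y); last first.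
  by exists Y; rewrite ?fsubset_refl // /gadget_answer YY1 YY2 fproperEneq eqxx.
have XY2 : reduct_sat P2 Phi Y X = false.
  apply: negbTE; apply: contra_notN notse2 => XY2.
  by apply/se_modelE; split; rewrite -?sameA // /se_pair YY2 XY2.
have ltXY : X `<` Y.
  by rewrite fproperEneq XY andbT; apply: contraFneq XY2 => ->.
by exists X; rewrite // /gadget_answer YY1 XY1 YY2 XY2 ltXY.
Qed.

Lemma separates_of_SE_fun P1 P2 Phi X Y :
  (forall s : {fset atom}, exists a, a \notin s) ->
  wf_elp P1 -> wf_elp P2 -> elp_atoms P1 = elp_atoms P2 -> elp_elits P1 = elp_elits P2 ->
  Phi `<=` elp_elits P1 -> SE_fun P1 Phi X Y -> ~ SE_fun P2 Phi X Y ->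
  separates P1 P2 \/ separates P2 P1.
Proof.
move=> infinite wf1 wf2 sameA sameE PhiE1 [real1 se1] notSE2.
have PhiE2 : Phi `<=` elp_elits P2 by rewrite -sameE.
pose good Y0 := {in elp_elits P1, forall l, l \notin Phi -> sat_lit Y0 l}.
have [real2|notreal2] := classic (realizable P2 Phi); last first.
  have [W [W_models [[I IW] [_ W_good]]]] := realizable_seq real1.
  have /is_model_elp_reductE[IA II] := W_models I IW.
  left; apply: (separates_of_gadget_answer (Phi := Phi) (X0 := I) (Y0 := I)) => //.
  by rewrite /gadget_answer II fproperEneq eqxx; split=> // _ l lE lPhi; apply: W_good.
have [X0 X0Y neq] := se_model_gadget_answer sameA se1 (fun se2 => notSE2 (conj real2 se2)).
have [_ YA _] := (se_modelE _ _ _ _).1 se1.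
(* The gadget answers of the two sides differ, so one of them agrees with [good Y]. *)
have [answer1|answer2] :
    (gadget_answer P1 Phi X0 Y <-> good Y) \/ (gadget_answer P2 Phi X0 Y <-> good Y).
  case: (classic (good Y)) => goodY; move: neq;
    case: (gadget_answer P1 _ _ _); case: (gadget_answer P2 _ _ _) => // _;
    [left | right | right | left]; split=> // /goodY.
- by left; apply: (separates_of_gadget_answer (Phi := Phi) (X0 := X0) (Y0 := Y)).
- right; apply: (separates_of_gadget_answer (Phi := Phi) (X0 := X0) (Y0 := Y));
    by rewrite -?sameA -?sameE // => _; rewrite eq_sym.
Qed.

Lemma not_equiv_of_separation P1 P2 Q Ic :
  is_wv (elp_union P1 Q) Ic -> ~ is_cwv (elp_union P2 Q) Ic ->
  ~ wv_equiv (elp_union P1 Q) (elp_union P2 Q) /\ ~ cwv_equiv (elp_union P1 Q) (elp_union P2 Q).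
Proof.
move=> /[dup] wv1 [Phi [cwv1 _]] notcwv2; split=> [wv_eq|cwv_eq]; apply: notcwv2.
  by have [Phi' [cwv2 _]] := (wv_eq Ic).1 wv1; exists Phi'.
by apply/(cwv_eq Ic).1; exists Phi.
Qed.

Lemma same_SE_fun_of_plain_equiv P1 P2 :
  (forall s : {fset atom}, exists a, a \notin s) ->
  wf_elp P1 -> wf_elp P2 -> elp_atoms P1 = elp_atoms P2 -> elp_elits P1 = elp_elits P2 ->
  (forall Q, wf_elp Q -> is_plain Q ->
     wv_equiv (elp_union P1 Q) (elp_union P2 Q) \/ cwv_equiv (elp_union P1 Q) (elp_union P2 Q)) ->
  same_SE_fun P1 P2.
Proof.
move=> infinite wf1 wf2 sameA sameE equiv.
have not_sep12 : ~ separates P1 P2.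
  case=> Q [wfQ plainQ [Ic [wv notcwv]]]; have [nwv ncwv] := not_equiv_of_separation wv notcwv.
  by case: (equiv Q wfQ plainQ).
have not_sep21 : ~ separates P2 P1.
  case=> Q [wfQ plainQ [Ic [wv notcwv]]]; have [nwv ncwv] := not_equiv_of_separation wv notcwv.
  by case: (equiv Q wfQ plainQ) => [e|e]; [apply: nwv | apply: ncwv] => J; apply: iff_sym.
move=> Phi PhiE1 PhiE2 X Y; split=> se; apply: NNPP => notse.
  by case: (separates_of_SE_fun infinite wf1 wf2 sameA sameE PhiE1 se notse).
by case: (separates_of_SE_fun infinite wf2 wf1 (esym sameA) (esym sameE) PhiE2 se notse).
Qed.

End Backward.

Theorem corollary1 (atom : choiceType)
  (atom_infinite : forall s : {fset atom}, exists a : atom, a \notin s)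
  (P1 P2 : elp atom)
  (wf1 : wf_elp P1) (wf2 : wf_elp P2)
  (sameA : elp_atoms P1 = elp_atoms P2)
  (sameE : elp_elits P1 = elp_elits P2) :
  [/\ strong_elp_wv_equiv P1 P2 <-> same_SE_fun P1 P2,
      strong_asp_wv_equiv P1 P2 <-> same_SE_fun P1 P2,
      strong_elp_cwv_equiv P1 P2 <-> same_SE_fun P1 P2
    & strong_asp_cwv_equiv P1 P2 <-> same_SE_fun P1 P2].
Proof.
have cwv := strong_elp_cwv_of_same_SE_fun wf1 wf2 sameA sameE.
have wv (sameSE : same_SE_fun P1 P2) : strong_elp_wv_equiv P1 P2.
  by move=> Q wfQ; apply: cwv_equiv_wv_equiv (cwv sameSE Q wfQ); rewrite /= sameE.
have back := same_SE_fun_of_plain_equiv atom_infinite wf1 wf2 sameA sameE.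
split; split.
- by move=> equiv; apply: back => Q wfQ _; left; apply: equiv.
- exact: wv.
- by move=> equiv; apply: back => Q wfQ plainQ; left; apply: equiv.
- by move=> sameSE Q wfQ _; apply: wv.
- by move=> equiv; apply: back => Q wfQ _; right; apply: equiv.
- exact: cwv.
- by move=> equiv; apply: back => Q wfQ plainQ; right; apply: equiv.
- by move=> sameSE Q wfQ _; apply: cwv.
Qed.
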